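(* Let $T=(V,E)$ be a tree with $\mathrm{pthin}(T)=2$, and let $\sigma$ be an ordering of $V$ and $S=\{V^0,V^1\}$ a partition of $V$ that are strongly consistent. Let $v_0\in V^0$ and $v_1\in V^1$ be adjacent. If $u$ is a vertex adjacent to neither $v_0$ nor $v_1$ (and distinct from them) with $u<v_0$, then $u<v_1$ as well (i.e., $u$ is strictly before the edge $v_0v_1$). Symmetrically, if such $u$ satisfies $v_0<u$, then $v_1<u$ (i.e., $u$ is strictly after $v_0v_1$).
   Context: For a graph $G=(V,E)$, a linear ordering $<$ of $V$ and a partition of $V$ into classes are called strongly consistent if for every triple $r<s<t$ of vertices with $rt\in E$: if $r$ and $s$ belong to the same class then $st\in E$, and if $s$ and $t$ belong to the same class then $rs\in E$. The proper thinness $\mathrm{pthin}(G)$ is the minimum $k$ such that some ordering and some partition into $k$ classes are strongly consistent. A vertex $u\notin\{v_0,v_1\}$ is strictly before the edge $v_0v_1$ if $u<v_0$ and $u<v_1$, and strictly after if $v_0<u$ and $v_1<u$. *)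

From mathcomp Require Import all_boot.
Set Implicit Arguments. Unset Strict Implicit. Unset Printing Implicit Defensive.

Definition simple_graph (T : finType) (e : rel T) : Prop :=
  symmetric e /\ irreflexive e.

Definition is_tree (T : finType) (e : rel T) : Prop :=
  [/\ simple_graph e,
      (forall x y : T, connect e x y) &
      ~ (exists s : seq T, [/\ uniq s, 3 <= size s & cycle e s])].

(* A linear ordering of V is represented by an injective position map
   pos : T -> nat, with  x < y  iff  pos x < pos y. *)
Definition lin_order (T : finType) (pos : T -> nat) : Prop := injective pos.

(* Strong consistency of an ordering pos and a partition given by the
   class map c : T -> K (vertices x, y are in the same class iff c x = c y). *)
Definition strongly_consistent (T : finType) (e : rel T) (K : eqType)
  (pos : T -> nat) (c : T -> K) : Prop :=
  forall r s t : T, pos r < pos s -> pos s < pos t -> e r t ->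
    (c r = c s -> e s t) /\ (c s = c t -> e r s).

Definition pthin_le (T : finType) (e : rel T) (k : nat) : Prop :=
  exists (pos : T -> nat) (c : T -> 'I_k),
    lin_order pos /\ strongly_consistent e pos c.

Definition pthin_eq (T : finType) (e : rel T) (k : nat) : Prop :=
  pthin_le e k /\ ~ pthin_le e k.-1.

From mathcomp Require Import all_boot.

Set Implicit Arguments.
Unset Strict Implicit.

(* With two classes, the endpoints of an edge joining different classes cover
   every class, so strong consistency forces every vertex strictly between
   them to be adjacent to one of them.  A vertex adjacent to neither endpoint
   therefore cannot separate them: it lies before both or after both.  This
   holds in any graph. *)

Section TwoClasses.

Variables (T : finType) (e : rel T) (pos : T -> nat) (c : T -> bool).
Hypotheses (e_sym : symmetric e) (consistent : strongly_consistent e pos c).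

Lemma adjacent_of_between_bichromatic (x y u : T) :
  e x y -> c x != c y -> pos x < pos u -> pos u < pos y -> e u x || e u y.
Proof.
move=> exy cxy xu uy; have [same_x same_y] := consistent xu uy exy.
have [cux | cuy] : c u = c x \/ c u = c y.
  by move: cxy; case: (c x); case: (c y); case: (c u); auto.
- by rewrite (same_x (esym cux)) orbT.
- by rewrite e_sym same_y.
Qed.

Lemma not_between_of_nonadjacent (x y u : T) :
  e x y -> c x != c y -> ~~ e u x -> ~~ e u y ->
  ~ (pos x < pos u < pos y) /\ ~ (pos y < pos u < pos x).
Proof.
move=> exy cxy nux nuy; split=> /andP[l r].
- by move: (adjacent_of_between_bichromatic exy cxy l r); rewrite (negbTE nux) (negbTE nuy).
- have eyx : e y x by rewrite e_sym.
  have cyx : c y != c x by rewrite eq_sym.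
  by move: (adjacent_of_between_bichromatic eyx cyx l r); rewrite (negbTE nux) (negbTE nuy).
Qed.

End TwoClasses.

Lemma lin_order_gt_of_not_lt (T : finType) (pos : T -> nat) (u v : T) :
  lin_order pos -> u != v -> ~~ (pos u < pos v) -> pos v < pos u.
Proof.
by move=> inj_pos nuv; case: ltngtP => // /inj_pos /eqP; rewrite (negbTE nuv).
Qed.

Theorem propositionA3 (T : finType) (e : rel T) (pos : T -> nat)
  (c : T -> bool) (v0 v1 : T) :
  is_tree e -> pthin_eq e 2 ->
  lin_order pos -> strongly_consistent e pos c ->
  c v0 = false -> c v1 = true -> e v0 v1 ->
  forall u : T, u != v0 -> u != v1 -> ~~ e u v0 -> ~~ e u v1 ->
    (pos u < pos v0 -> pos u < pos v1) /\
    (pos v0 < pos u -> pos v1 < pos u).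
Proof.
move=> [[e_sym _] _ _] _ inj_pos consistent c0 c1 e01 u _ u_neq_v1 nadj0 nadj1.
have c01 : c v0 != c v1 by rewrite c0 c1.
have [not_01 not_10] := not_between_of_nonadjacent e_sym consistent e01 c01 nadj0 nadj1.
split=> lt; apply/contraT.
- move=> /(lin_order_gt_of_not_lt inj_pos u_neq_v1) lt'; exfalso.
  by apply: not_10; rewrite lt lt'.
- rewrite eq_sym in u_neq_v1; move=> /(lin_order_gt_of_not_lt inj_pos u_neq_v1) lt'; exfalso.
  by apply: not_01; rewrite lt lt'.
Qed.
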